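(* There is no constant $c\in(0,1)$ such that every finite group $G$ with $sd^*(G)>c$ is an Iwasawa group.
   Context: For a finite group $G$, $L(G)$ denotes the lattice of all subgroups of $G$. The subgroup commutativity degree of $G$ is $$sd(G)=\frac{1}{|L(G)|^2}\,\left|\{(H,K)\in L(G)^2 \mid HK=KH\}\right|.$$ Define $sd^*(G)=\min\{sd(S)\mid S \text{ is a section of } G\}$, where a section of $G$ is a quotient $H/N$ with $N\trianglelefteq H\le G$. An Iwasawa group is a finite nilpotent group whose subgroup lattice is modular. *)

From HB Require Import structures.
From mathcomp Require Import all_boot all_order all_algebra all_fingroup all_solvable.
From mathcomp Require Import reals.
Set Implicit Arguments. Unset Strict Implicit. Unset Printing Implicit Defensive.
Import Order.TTheory GRing.Theory Num.Theory.

Local Open Scope group_scope.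

Definition subgroup_lattice (gT : finGroupType) (G : {set gT}) : {set {group gT}} :=
  [set H : {group gT} | H \subset G].

Definition n_permuting_pairs (gT : finGroupType) (G : {set gT}) : nat :=
  #|[set HK : {group gT} * {group gT} |
      [&& HK.1 \subset G, HK.2 \subset G & (HK.1 * HK.2 == HK.2 * HK.1)%g]]|.

Definition sd (gT : finGroupType) (G : {set gT}) : rat :=
  ((n_permuting_pairs G)%:R / (#|subgroup_lattice G| ^ 2)%:R)%R.

(* sd^*(G) = min of sd(H/N) over sections H/N, N <| H <= G.
   (All values of sd lie in [0,1] and the trivial section exists, so the
   starting value 1 of the iterated minimum is harmless.) *)
Definition sdstar (gT : finGroupType) (G : {set gT}) : rat :=
  \big[Order.min/1%R]_(H : {group gT} | H \subset G)
    \big[Order.min/1%R]_(N : {group gT} | N <| H) sd (H / N)%g.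

Definition modular_subgroup_lattice (gT : finGroupType) (G : {set gT}) : bool :=
  [forall X : {group gT}, forall Y : {group gT}, forall Z : {group gT},
    [&& X \subset G, Y \subset G, Z \subset G & X \subset Z] ==>
    (X <*> (Y :&: Z) == (X <*> Y) :&: Z)].

Definition iwasawa (gT : finGroupType) (G : {set gT}) : bool :=
  nilpotent G && modular_subgroup_lattice G.

From HB Require Import structures.
From mathcomp Require Import all_boot all_order all_algebra all_fingroup all_solvable all_field.
From mathcomp Require Import reals.
From mathcomp Require Import ring zify.
Import Order.TTheory GRing.Theory Num.Theory.
Set Implicit Arguments. Unset Strict Implicit. Unset Printing Implicit Defensive.

(* Let p be an odd prime, F a field of characteristic 2 containing a primitive
   p-th root of unity x, and K = F_2[x].  The affine group G of the maps
   y |-> x^i y + b (b in K) is a Frobenius group K >< C_p with trivial centre,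
   so it is not nilpotent.  Its translation subgroup T ~ (K, +) is abelian and
   irreducible under x, so a subgroup of G either lies in T, is G, or is a
   cyclic complement of T; hence every section H/N other than G/1 is abelian
   and sd^*(G) = sd(G).  Pairs of subgroups of T permute, at most |K| + 1
   subgroups of G are not in T, and T has at least |K|^2/16 subgroups, so
   sd(G) >= 1 - 64/|K|, which tends to 1 since |K| > p. *)

Section SubgroupCommutativityDegree.
Variable gT : finGroupType.
Implicit Types A G H N X : {group gT}.
Local Open Scope group_scope.

Lemma subgroup_lattice_gt0 X : (0 < #|subgroup_lattice X|)%N.
Proof. by apply/card_gt0P; exists 1%G; rewrite inE sub1G. Qed.

Lemma subgroup_latticeS A X :
  A \subset X -> subgroup_lattice A \subset subgroup_lattice X.
Proof. by move=> sAX; apply/subsetP => H; rewrite !inE => /subset_trans->. Qed.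

Lemma sqr_subgroup_lattice_abelian_le A X : A \subset X -> abelian A ->
  (#|subgroup_lattice A| ^ 2 <= n_permuting_pairs X)%N.
Proof.
move=> sAX abA; rewrite expnS expn1 -cardsX; apply: subset_leq_card.
apply/subsetP => -[H K]; rewrite !inE /= => /andP[sHA sKA].
rewrite !(subset_trans _ sAX) //=; apply/eqP/normC/cents_norm.
exact: subset_trans sHA (subset_trans abA (centS sKA)).
Qed.

Lemma sd_ge_abelian_subgroup X A b : A \subset X -> abelian A ->
  (#|subgroup_lattice X| <= #|subgroup_lattice A| + b)%N ->
  (1 - (2 * b)%:R / #|subgroup_lattice X|%:R <= sd X)%R.
Proof.
move=> sAX abA leXAb; have := sqr_subgroup_lattice_abelian_le sAX abA.
have := subset_leq_card (subgroup_latticeS sAX).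
have := subgroup_lattice_gt0 X; rewrite /sd.
set l := #|subgroup_lattice X|; set a := #|subgroup_lattice A|.
set n := n_permuting_pairs X => l_gt0 le_al le_a2n.
have le_l2 : (l * l <= n + 2 * b * l)%N by nia.
have l_gt0' : (0 < l%:R :> rat)%R by rewrite ltr0n.
rewrite natrX ler_pdivlMr ?exprn_gt0 //.
have -> : ((1 - (2 * b)%:R / l%:R) * l%:R ^+ 2 = (l * l)%:R - (2 * b * l)%:R :> rat)%R.
  by rewrite !natrM; field; rewrite lt0r_neq0.
by rewrite lerBlDr -natrD ler_nat.
Qed.

Lemma sd_abelian X : abelian X -> (1 <= sd X)%R.
Proof.
move=> abX; have := sd_ge_abelian_subgroup (subxx X) abX (leq_addr 0 _).
by rewrite muln0 mul0r subr0.
Qed.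

Lemma sdstar_ge G (beta : rat) : (beta <= 1)%R ->
  (forall H N, H \subset G -> N <| H -> (beta <= sd (H / N)%g)%R) ->
  (beta <= sdstar G)%R.
Proof.
move=> beta_le1 sd_sections.
have min_ge u v : (beta <= u -> beta <= v -> beta <= Order.min u v)%R.
  by rewrite le_min => -> ->.
apply: (big_ind (fun v => beta <= v)%R beta_le1 min_ge) => H sHG.
by apply: (big_ind (fun v => beta <= v)%R beta_le1 min_ge) => N; apply: sd_sections.
Qed.

End SubgroupCommutativityDegree.

Section InjectiveImage.
Local Open Scope group_scope.
Variables (aT rT : finGroupType) (D G : {group aT}) (f : {morphism D >-> rT}).
Hypotheses (injf : 'injm f) (sGD : G \subset D).

Let fG (H : {group aT}) := (f @* H)%G.

Let fG_inj : {in subgroup_lattice G &, injective fG}.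
Proof.
move=> H K; rewrite !inE => sHG sKG /(congr1 val) /=.
by move/(injm_morphim_inj injf (subset_trans sHG sGD) (subset_trans sKG sGD))/val_inj.
Qed.

Lemma subgroup_lattice_injm : subgroup_lattice (f @* G) = fG @: subgroup_lattice G.
Proof.
apply/setP => Y; rewrite inE; apply/idP/imsetP => [sYfG | [H]].
  have sYfD : Y \subset f @* D by rewrite (subset_trans sYfG) ?morphimS.
  exists (f @*^-1 Y)%G; last by apply: val_inj; rewrite /= morphpreK.
  by rewrite inE -(injmSK injf) ?subsetIl // morphpreK.
by rewrite inE => sHG ->; apply: morphimS.
Qed.

Let permute_injm (H K : {group aT}) : H \subset D -> K \subset D ->
  (f @* H * f @* K == f @* K * f @* H) = (H * K == K * H).
Proof.
move=> sHD sKD; rewrite -!morphimMl //; apply/eqP/eqP => [|-> //].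
by apply: injm_morphim_inj; rewrite // mul_subG.
Qed.

Lemma sd_injm : sd (f @* G) = sd G.
Proof.
rewrite /sd /n_permuting_pairs subgroup_lattice_injm card_in_imset //.
congr (_%:R / _)%R.
pose fG2 (HK : {group aT} * {group aT}) := (fG HK.1, fG HK.2).
rewrite -(card_in_imset (f := fG2)); last first.
  move=> [H1 K1] [H2 K2]; rewrite !inE /= => /and3P[sH1 sK1 _] /and3P[sH2 sK2 _].
  by case=> eH eK; congr pair; apply: fG_inj; rewrite ?inE //; apply: group_inj.
apply: eq_card => -[Y Z]; rewrite inE /=; apply/idP/imsetP => [|[[H K]]].
  case/and3P=> sYfG sZfG; have: Z \in subgroup_lattice (f @* G) by rewrite inE.
  have: Y \in subgroup_lattice (f @* G) by rewrite inE.
  rewrite subgroup_lattice_injm => /imsetP[H + ->] /imsetP[K + ->].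
  rewrite !inE => sHG sKG; rewrite permute_injm ?(subset_trans _ sGD) // => pHK.
  by exists (H, K); rewrite // inE sHG sKG.
rewrite inE /= => /and3P[sHG sKG pHK] [-> ->] /=.
by rewrite !morphimS // permute_injm ?(subset_trans _ sGD).
Qed.

End InjectiveImage.

Lemma sd_quotient1 (gT : finGroupType) (G : {group gT}) : sd (G / 1)%g = sd G.
Proof. by rewrite quotientE sd_injm ?coset1_injm ?norms1. Qed.

Section AffineGroup.
Local Open Scope ring_scope.
Variables (F : finFieldType) (p : nat) (x : F).
Hypotheses (charF : 2 \in [pchar F]%R) (p_pr : prime p) (x_prim : p.-primitive_root x).

Lemma x_neq0 : x != 0.
Proof.
apply: contra_eq_neq (prim_expr_order x_prim) => ->.
by rewrite expr0n gtn_eqF ?prime_gt0 // eq_sym oner_neq0.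
Qed.

Lemma x_neq1 : x != 1.
Proof.
rewrite -[x]expr1 -(prim_order_dvd x_prim) dvdn1.
by apply: contraTneq (prime_gt1 p_pr) => ->.
Qed.

Definition mulx_closed (V : {set F}) : bool :=
  [&& 0 \in V, [forall a in V, [forall b in V, a + b \in V]]
    & [forall a in V, x * a \in V]].

Lemma mulx_closedP (V : {set F}) : reflect
  [/\ 0 \in V, {in V &, forall a b, a + b \in V} & {in V, forall a, x * a \in V}]
  (mulx_closed V).
Proof.
apply: (iffP and3P) => [[V0 /forall_inP VD /forall_inP VMx] | [V0 VD VMx]].
  by split=> // a b aV; move/forall_inP: (VD a aV); apply.
by split=> //; apply/forall_inP => a aV; [apply/forall_inP => b; apply: VD | apply: VMx].
Qed.

(* K = F_2[x], the subfield of F generated by x. *)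
Definition K : {set F} := \bigcap_(V | mulx_closed V && (1 \in V)) V.

Lemma K_min (V : {set F}) : mulx_closed V -> 1 \in V -> K \subset V.
Proof. by move=> clV V1; apply: bigcap_inf; rewrite clV V1. Qed.

Lemma K1 : 1 \in K.
Proof. by apply/bigcapP => V /andP[]. Qed.

Lemma mulx_closedK : mulx_closed K.
Proof.
apply/mulx_closedP; split=> [|a b /bigcapP aK /bigcapP bK|a /bigcapP aK];
  apply/bigcapP => V /[dup] /andP[/mulx_closedP[V0 VD VMx] _] PV //.
- by apply: VD; [apply: aK | apply: bK].
- by apply: VMx; apply: aK.
Qed.

Lemma K0 : 0 \in K.
Proof. by case/mulx_closedP: mulx_closedK. Qed.

Lemma KD a b : a \in K -> b \in K -> a + b \in K.
Proof. by case/mulx_closedP: mulx_closedK => _ KD _; apply: KD. Qed.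

Lemma KMxn i a : a \in K -> x ^+ i * a \in K.
Proof.
case/mulx_closedP: mulx_closedK => _ _ KMx aK.
by elim: i => [|i IHi]; rewrite ?mul1r // exprS -mulrA KMx.
Qed.

Lemma KXn i : x ^+ i \in K.
Proof. by rewrite -[x ^+ i]mulr1 KMxn ?K1. Qed.

(* Multiplication by v maps K injectively into W. *)
Lemma mulx_closed_sub_eqK (W : {set F}) v :
  W \subset K -> mulx_closed W -> v \in W -> v != 0 -> W = K.
Proof.
move=> sWK /mulx_closedP[W0 WD WMx] vW v_neq0.
have sK_Wv : K \subset [set y | y * v \in W].
  apply: K_min; last by rewrite inE mul1r.
  apply/mulx_closedP; split=> [|a b|a]; rewrite !inE ?mul0r // => aW.
    by rewrite mulrDl; apply: WD.
  by rewrite -mulrA; apply: WMx.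
apply/eqP; rewrite eqEcard sWK -(card_imset _ (mulIf v_neq0)) subset_leq_card //.
by apply/subsetP => _ /imsetP[y /(subsetP sK_Wv) + ->]; rewrite inE.
Qed.

Lemma p_lt_card_K : (p < #|K|)%N.
Proof.
have sXK : 0 |: [set x ^+ i | i : 'I_p] \subset K.
  by apply/subsetP => y; rewrite !inE => /orP[/eqP-> | /imsetP[i _ ->]]; rewrite ?K0 ?KXn.
apply: leq_trans (subset_leq_card sXK); rewrite cardsU1 card_imset ?card_ord.
  by case: imsetP => // -[i _ /esym/eqP]; rewrite expf_eq0 (negPf x_neq0) andbF.
move=> i j /eqP; rewrite (eq_prim_root_expr x_prim) !modn_small // => /eqP.
exact: val_inj.
Qed.

Implicit Types (a b : F) (s t g h : {perm F}).

Definition lin s : F := s 1 - s 0.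

Definition affine s : bool := [forall y, s y == lin s * y + s 0].

Lemma affineP s : reflect (forall y, s y = lin s * y + s 0) (affine s).
Proof. by apply: (iffP forallP) => s_aff y; apply/eqP. Qed.

Lemma affine_mulE s t : affine s -> affine t ->
  forall y, (s * t)%g y = lin s * lin t * y + (lin t * s 0 + t 0).
Proof. by move=> /affineP s_aff /affineP t_aff y; rewrite permM t_aff s_aff; ring. Qed.

Lemma lin_affineM s t : affine s -> affine t -> lin (s * t)%g = lin s * lin t.
Proof. by move=> s_aff t_aff; rewrite [LHS]/lin !(affine_mulE s_aff t_aff); ring. Qed.

Lemma affineM0 s t : affine s -> affine t -> (s * t)%g 0 = lin t * s 0 + t 0.
Proof. by move=> s_aff t_aff; rewrite (affine_mulE s_aff t_aff) mulr0 add0r. Qed.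

Lemma affineM s t : affine s -> affine t -> affine (s * t)%g.
Proof.
move=> s_aff t_aff; apply/affineP => y.
by rewrite lin_affineM // affineM0 // affine_mulE.
Qed.

Lemma lin1 : lin 1%g = 1.
Proof. by rewrite /lin !perm1 subr0. Qed.

Lemma affine1 : affine 1%g.
Proof. by apply/affineP => y; rewrite lin1 !perm1 mul1r addr0. Qed.

Lemma group_set_affine : group_set
  [set s | [&& affine s, lin s ^+ p == 1 & s 0 \in K]].
Proof.
apply/group_setP; split=> [|s t].
  by rewrite inE affine1 lin1 expr1n eqxx perm1 K0.
rewrite !inE => /and3P[s_aff /eqP s_p s0K] /and3P[t_aff /eqP t_p t0K].
rewrite affineM // lin_affineM // exprMn s_p t_p mulr1 eqxx affineM0 //.
by have [i ->] := prim_rootP x_prim t_p; rewrite KD ?KMxn.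
Qed.

(* The maps y |-> x^i * y + b with b in K: the p-th roots of unity in F are
   exactly the powers of x. *)
Definition G : {group {perm F}} := Group group_set_affine.

Lemma memG s : (s \in G) = [&& affine s, lin s ^+ p == 1 & s 0 \in K].
Proof. by rewrite inE. Qed.

Lemma G_affine s : s \in G -> forall y, s y = lin s * y + s 0.
Proof. by rewrite memG => /and3P[/affineP]. Qed.

Lemma G_lin s : s \in G -> exists i, lin s = x ^+ i.
Proof. by rewrite memG => /and3P[_ /eqP/(prim_rootP x_prim)[i ->] _]; exists i. Qed.

Lemma G_lin_neq0 s : s \in G -> lin s != 0.
Proof. by case/G_lin=> i ->; rewrite expf_neq0 ?x_neq0. Qed.

Lemma G_zero s : s \in G -> s 0 \in K.
Proof. by rewrite memG => /and3P[]. Qed.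

Lemma linM s t : s \in G -> t \in G -> lin (s * t)%g = lin s * lin t.
Proof. by rewrite !memG => /and3P[s_aff _ _] /and3P[t_aff _ _]; apply: lin_affineM. Qed.

Lemma linV s : s \in G -> lin s^-1%g = (lin s)^-1.
Proof.
move=> sG; apply: (mulfI (G_lin_neq0 sG)).
by rewrite -linM ?groupV // mulgV lin1 divff ?G_lin_neq0.
Qed.

Lemma linX s k : s \in G -> lin (s ^+ k)%g = lin s ^+ k.
Proof.
move=> sG; elim: k => [|k IHk]; first by rewrite lin1.
by rewrite expgS linM ?groupX // IHk exprS.
Qed.

Lemma G_eq s t : s \in G -> t \in G -> lin s = lin t -> s 0 = t 0 -> s = t.
Proof.
by move=> sG tG eq_lin eq0; apply/permP => y; rewrite (G_affine sG) (G_affine tG) eq_lin eq0.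
Qed.

Lemma group_set_lin1 : group_set [set s in G | lin s == 1].
Proof.
apply/group_setP; split=> [|s t]; first by apply/setIdP; rewrite group1 lin1.
move=> /setIdP[sG /eqP s1] /setIdP[tG /eqP t1]; apply/setIdP.
by rewrite groupM // linM // s1 t1 mulr1.
Qed.

Definition T : {group {perm F}} := Group group_set_lin1.

Lemma memT s : (s \in T) = (s \in G) && (lin s == 1).
Proof. by rewrite inE. Qed.

Lemma sTG : T \subset G.
Proof. by apply/subsetP => s; rewrite memT => /andP[]. Qed.

Lemma mulgV_inT s t : s \in G -> t \in G -> lin s = lin t -> (s * t^-1)%g \in T.
Proof.
move=> sG tG eq_lin; rewrite memT groupM ?groupV //=.
by rewrite linM ?groupV // linV // eq_lin divff ?G_lin_neq0.
Qed.

Definition transl a : {perm F} := perm (addIr a).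

Definition mulx : {perm F} := perm (mulfI x_neq0).

Lemma translE a y : transl a y = y + a.
Proof. by rewrite permE. Qed.

Lemma mulxE y : mulx y = x * y.
Proof. by rewrite permE. Qed.

Lemma lin_transl a : lin (transl a) = 1.
Proof. by rewrite /lin !translE add0r addrK. Qed.

Lemma transl_inG a : (transl a \in G) = (a \in K).
Proof.
rewrite memG lin_transl expr1n eqxx translE add0r /= andb_idl //.
by move=> _; apply/affineP => y; rewrite lin_transl !translE add0r mul1r.
Qed.

Lemma transl_inT a : (transl a \in T) = (a \in K).
Proof. by rewrite memT transl_inG lin_transl eqxx andbT. Qed.

Lemma translD a b : (transl a * transl b)%g = transl (a + b).
Proof. by apply/permP => y; rewrite permM !translE addrA. Qed.

Lemma transl0 : transl 0 = 1%g.
Proof. by apply/permP => y; rewrite translE perm1 addr0. Qed.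

Lemma transl_inj : injective transl.
Proof. by move=> a b /permP/(_ 0); rewrite !translE !add0r. Qed.

Lemma T_transl s : s \in T -> s = transl (s 0).
Proof.
by rewrite memT => /andP[sG /eqP s1]; apply/permP => y; rewrite (G_affine sG) s1 mul1r translE.
Qed.

Lemma lin_mulx : lin mulx = x.
Proof. by rewrite /lin !mulxE mulr1 mulr0 subr0. Qed.

Lemma mulx_inG : mulx \in G.
Proof.
rewrite memG lin_mulx (prim_expr_order x_prim) eqxx mulxE mulr0 K0 !andbT.
by apply/affineP => y; rewrite lin_mulx !mulxE mulr0 addr0.
Qed.

Lemma mulx_notinT : mulx \notin T.
Proof. by rewrite memT lin_mulx (negPf x_neq1) andbF. Qed.

Lemma conj_transl s a : s \in G -> (transl a ^ s)%g = transl (lin s * a).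
Proof.
move=> sG; apply/permP => y.
by rewrite /conjg !permM translE (G_affine sG (_ + a)) mulrDr addrAC -(G_affine sG) permKV translE.
Qed.

Lemma T_abelian : abelian T.
Proof.
by apply/centsP => s /T_transl-> t /T_transl->; rewrite /commute !translD addrC.
Qed.

Lemma T_normal : (T <| G)%g.
Proof.
rewrite /normal sTG; apply/subsetP => s sG; rewrite inE.
apply/subsetP => _ /imsetP[t tT ->]; rewrite (T_transl tT) conj_transl // transl_inT.
by have [i ->] := G_lin sG; rewrite KMxn ?G_zero ?(subsetP sTG).
Qed.

Lemma der1_G_subT : (G^`(1) \subset T)%g.
Proof.
rewrite derg1 gen_subG; apply/subsetP => _ /imset2P[s t sG tG ->].
rewrite memT groupR //= /commg /conjg !linM ?(groupM, groupV) // !linV //.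
by rewrite mulrCA mulKf ?G_lin_neq0 // mulVf ?G_lin_neq0.
Qed.

Lemma cent_transl1_subT g : g \in G -> commute g (transl 1) -> g \in T.
Proof.
move=> gG /permP/(_ 0); rewrite !permM !translE add0r (G_affine gG 1) mulr1.
by rewrite memT gG addrC => /addIr <-; rewrite eqxx.
Qed.

Lemma lin_expg_x g : g \in G -> g \notin T -> exists k, lin (g ^+ k)%g = x.
Proof.
move=> gG; rewrite memT gG /= => lin_g_neq1; have [i lin_g] := G_lin gG.
have prim_xi : p.-primitive_root (x ^+ i).
  by rewrite prim_root_exp_coprime // coprime_sym prime_coprime // (prim_order_dvd x_prim) -lin_g.
have [k x_eq] := prim_rootP prim_xi (prim_expr_order x_prim).
by exists k; rewrite linX // lin_g -x_eq.
Qed.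

Lemma T_irreducible (V : {group {perm F}}) g : V \subset T -> g \in G -> g \notin T ->
  g \in 'N(V)%g -> V :!=: 1%g -> T \subset V.
Proof.
move=> sVT gG gNT nVg ntV; have [k lin_gk] := lin_expg_x gG gNT.
pose W := [set a | transl a \in V].
have sWK : W \subset K.
  by apply/subsetP => a; rewrite inE => /(subsetP sVT); rewrite transl_inT.
have clW : mulx_closed W.
  apply/mulx_closedP; split=> [|a b|a]; rewrite !inE; first by rewrite transl0 group1.
    by rewrite -translD; apply: groupM.
  by rewrite -lin_gk -conj_transl ?groupX // memJ_norm ?groupX.
have [v vV v_neq1] := trivgPn _ ntV; have v_transl := T_transl (subsetP sVT v vV).
have v0W : v 0 \in W by rewrite inE -v_transl.
have v0_neq0 : v 0 != 0 by apply: contra_neq v_neq1 => v0; rewrite v_transl v0 transl0.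
have eqWK := mulx_closed_sub_eqK sWK clW v0W v0_neq0.
apply/subsetP => t tT; have: t 0 \in W by rewrite eqWK G_zero ?(subsetP sTG).
by rewrite inE -T_transl.
Qed.

Lemma subgroup_G_cases (H : {group {perm F}}) : H \subset G ->
  [\/ H \subset T, H :=: G | (H :&: T = 1)%g].
Proof.
move=> sHG; case sHT: (H \subset T); first by constructor 1.
have [g gH gNT] := subsetPn (negbT sHT); have gG := subsetP sHG g gH.
have nHTg : g \in 'N(H :&: T)%g.
  by rewrite -sub1set normsI // sub1set ?(subsetP (normG H)) ?(subsetP (normal_norm T_normal)).
have [tiHT | ntHT] := eqVneq (H :&: T)%g 1%g; first by constructor 3.
have sTH : T \subset H.
  exact: subset_trans (T_irreducible (subsetIr H T) gG gNT nHTg ntHT) (subsetIl H T).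
constructor 2; apply/eqP; rewrite eqEsubset sHG; apply/subsetP => s sG.
have [k lin_gk] := lin_expg_x gG gNT; have [i lin_s] := G_lin sG.
have sgT : (s * (g ^+ k ^+ i)^-1)%g \in T.
  by rewrite mulgV_inT ?groupX // linX ?groupX // lin_gk.
by rewrite -(mulgKV (g ^+ k ^+ i)%g s) groupM ?groupX // (subsetP sTH).
Qed.

Lemma abelian_TI (H : {group {perm F}}) :
  H \subset G -> (H :&: T = 1)%g -> abelian H.
Proof.
move=> sHG tiHT; apply/derG1P/trivgP; rewrite -tiHT subsetI der_sub.
exact: subset_trans (dergS 1 sHG) der1_G_subT.
Qed.

Lemma TI_cycle (H : {group {perm F}}) : H \subset G -> ~~ (H \subset T) ->
  (H :&: T = 1)%g -> exists2 a, a \in K & H :=: <[mulx * transl a]>%g.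
Proof.
move=> sHG /subsetPn[g gH gNT] tiHT; have gG := subsetP sHG g gH.
have [k lin_gk] := lin_expg_x gG gNT.
set e := (g ^+ k)%g in lin_gk; have eH : e \in H by rewrite groupX.
have eG := subsetP sHG e eH; have mulxeG : (mulx * transl (e 0))%g \in G.
  by rewrite groupM ?mulx_inG ?transl_inG ?G_zero.
have def_e : e = (mulx * transl (e 0))%g.
  apply: G_eq => //.
    by rewrite linM ?mulx_inG ?transl_inG ?G_zero // lin_mulx lin_transl mulr1.
  by rewrite permM translE mulxE mulr0 add0r.
exists (e 0); first exact: G_zero.
rewrite -def_e; apply/eqP; rewrite eqEsubset cycle_subG eH andbT; apply/subsetP => h hH.
have hG := subsetP sHG h hH; have [i lin_h] := G_lin hG.
have : (h * (e ^+ i)^-1)%g \in (H :&: T)%g.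
  by rewrite inE groupM ?groupV ?groupX // mulgV_inT ?groupX // linX // lin_gk.
by rewrite tiHT inE -eq_mulgV1 => /eqP->; apply: mem_cycle.
Qed.

Lemma card_subgroups_G :
  (#|subgroup_lattice G| <= #|subgroup_lattice T| + #|K|.+1)%N.
Proof.
pose C := [set <[mulx * transl a]>%G | a in K].
have sLG : subgroup_lattice G \subset subgroup_lattice T :|: (G |: C).
  apply/subsetP => H; rewrite !inE => sHG.
  case: (subgroup_G_cases sHG) => [-> // | /group_inj-> | tiHT]; first by rewrite eqxx orbT.
  case sHT: (H \subset T) => //=; apply/orP; right.
  have [a aK defH] := TI_cycle sHG (negbT sHT) tiHT.
  by apply/imsetP; exists a => //; apply: group_inj.
apply: leq_trans (subset_leq_card sLG) _; apply: leq_trans (leq_card_setU _ _) _.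
by rewrite leq_add2l cardsU1 -add1n leq_add ?leq_b1 ?leq_imset_card.
Qed.

Lemma transl_expg2 a : (transl a ^+ 2 = 1)%g.
Proof. by rewrite expgS expg1 translD addrr_pchar2 // transl0. Qed.

(* Each pair (a, b) generates a subgroup <transl a, transl b> of order at most 4,
   so at most 16 pairs give the same subgroup. *)
Lemma card_subgroups_T : (#|K| ^ 2 <= 16 * #|subgroup_lattice T|)%N.
Proof.
pose V (ab : F * F) := (<[transl ab.1]> <*> <[transl ab.2]>)%G.
have card_V ab : (#|V ab| <= 4)%N.
  have ord2 a : (#[transl a]%g <= 2)%N by rewrite dvdn_leq ?order_dvdn ?transl_expg2.
  rewrite /= cent_joinEl; last first.
    by apply: cents_cycle; rewrite /commute !translD addrC.
  apply: leq_trans (leq_mul (ord2 ab.1) (ord2 ab.2)).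
  by rewrite mul_cardG leq_pmulr ?cardG_gt0.
rewrite expnS expn1 -cardsX -sum1_card.
rewrite (partition_big V (fun W => W \in subgroup_lattice T)) => [|[a b]]; last first.
  by case/setXP=> aK bK; rewrite inE join_subG !cycle_subG !transl_inT aK bK.
rewrite mulnC -sum_nat_const leq_sum // => W _; rewrite sum1dep_card.
case: (set_0Vmem [set ab | (ab \in setX K K) && (V ab == W)]) => [-> | [ab0]].
  by rewrite cards0.
rewrite inE => /andP[_ /eqP <-].
have card_preV : (#|transl @^-1: V ab0| <= 4)%N.
  rewrite -(card_imset _ transl_inj); apply: leq_trans (card_V ab0).
  by apply: subset_leq_card; apply/subsetP => _ /imsetP[a + ->]; rewrite inE.
apply: leq_trans (_ : #|setX (transl @^-1: V ab0) (transl @^-1: V ab0)| <= _)%N.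
  apply: subset_leq_card; apply/subsetP => -[a b]; rewrite inE => /andP[_ /eqP <-].
  by rewrite !inE /= !mem_gen // !inE !cycle_id ?orbT.
by rewrite cardsX (leq_mul card_preV card_preV).
Qed.

Lemma quotient_G_cases (H N : {group {perm F}}) : H \subset G -> (N <| H)%g ->
  abelian (H / N)%g \/ H = G /\ N = 1%G.
Proof.
move=> sHG nsNH.
have [sHT | /group_inj eqHG | tiHT] := subgroup_G_cases sHG.
- by left; apply/quotient_abelian/(abelianS sHT T_abelian).
- subst H; have nsNT : (N :&: T <| G)%g := normalI nsNH T_normal.
  have [tiNT | ntNT] := eqVneq (N :&: T)%g 1%g; [right | left].
    suff sNT : N \subset T by split=> //; apply/group_inj/trivgP; rewrite -tiNT subsetI subxx.
    have nNT : N \subset 'N_N(T)%g.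
      by rewrite subsetI subxx (subset_trans (normal_sub nsNH)) ?normal_norm ?T_normal.
    have nTN : T \subset 'N_T(N)%g by rewrite subsetI subxx (subset_trans sTG) ?normal_norm.
    have /commG1P cNT : [~: N, T]%g = 1%g by apply/trivgP; rewrite -tiNT commg_subI.
    apply/subsetP => n nN; apply: cent_transl1_subT; first exact: (subsetP (normal_sub nsNH)).
    by apply: (centsP cNT); rewrite ?transl_inT ?K1.
  have nNTmulx : mulx \in 'N(N :&: T)%g by rewrite (subsetP (normal_norm nsNT)) ?mulx_inG.
  have sTNT := T_irreducible (subsetIr N T) mulx_inG mulx_notinT nNTmulx ntNT.
  by apply/sub_der1_abelian/(subset_trans der1_G_subT)/(subset_trans sTNT)/subsetIl.
- by left; apply/quotient_abelian/(abelian_TI sHG tiHT).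
Qed.

Lemma center_G : 'Z(G)%g = 1%g.
Proof.
apply/trivgP/subsetP => z /centerP[zG cGz]; rewrite inE.
have zT : z \in T by apply: cent_transl1_subT => //; apply: cGz; rewrite transl_inG K1.
have def_z := T_transl zT; set a := z 0 in def_z.
have := cGz mulx mulx_inG; rewrite def_z => /permP/(_ 0).
rewrite !permM !translE !mulxE add0r mulr0 add0r => /eqP.
rewrite -subr_eq0 -{2}(mul1r a) -mulrBl mulf_eq0 subr_eq0 (negPf x_neq1) /=.
by move/eqP->; rewrite transl0.
Qed.

Lemma G_not_nilpotent : ~~ nilpotent G.
Proof.
apply/negP => nilG; have := center_nil_eq1 nilG; rewrite center_G eqxx => /esym/eqP G1.
by have := mulx_inG; rewrite G1 inE => /eqP mulx1; move: mulx_notinT; rewrite mulx1 group1.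
Qed.

Lemma sd_bound_arith (n l : nat) : (0 < n)%N -> (n ^ 2 <= 16 * l)%N ->
  1 - 64%:R / n%:R <= 1 - (2 * n.+1)%:R / l%:R :> rat.
Proof.
move=> n_gt0 le_n2_l; have l_gt0 : (0 < l)%N by nia.
have n_gt0R : 0 < n%:R :> rat by rewrite ltr0n.
have l_gt0R : 0 < l%:R :> rat by rewrite ltr0n.
rewrite lerD2l lerN2 (ler_pdivrMr _ _ l_gt0R) mulrAC (ler_pdivlMr _ _ n_gt0R) -!natrM ler_nat.
nia.
Qed.

Lemma sd_G_ge : 1 - 64%:R / #|K|%:R <= sd G :> rat.
Proof.
apply: le_trans (sd_ge_abelian_subgroup sTG T_abelian card_subgroups_G).
apply: sd_bound_arith; first by apply/card_gt0P; exists 0; apply: K0.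
apply: leq_trans card_subgroups_T _.
by rewrite leq_mul2l subset_leq_card ?subgroup_latticeS ?sTG.
Qed.

Lemma sdstar_G_ge : 1 - 64%:R / #|K|%:R <= sdstar G :> rat.
Proof.
have le1 : 1 - 64%:R / #|K|%:R <= 1 :> rat by rewrite lerBlDr lerDl divr_ge0 ?ler0n.
apply: (sdstar_ge le1) => H N sHG nsNH.
have [abHN | [-> ->]] := quotient_G_cases sHG nsNH; last by rewrite sd_quotient1 sd_G_ge.
exact: le_trans le1 (sd_abelian (X := (H / N)%G) abHN).
Qed.

End AffineGroup.

Lemma prime_prim_root (R : nzRingType) p (z : R) :
  prime p -> (z ^+ p = 1)%R -> z != 1%R -> (p.-primitive_root z)%R.
Proof.
move=> p_pr zp z_neq1; have [m prim_m /(primeP p_pr).2] := prim_order_exists (prime_gt0 p_pr) zp.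
case/pred2P=> [m1 | <- //]; move: (prim_expr_order prim_m).
by rewrite m1 expr1 => z1; rewrite z1 eqxx in z_neq1.
Qed.

Lemma exists_pchar2_prim_root p : prime p -> odd p ->
  exists (F : finFieldType) (x : F), 2 \in [pchar F]%R /\ (p.-primitive_root x)%R.
Proof.
move=> p_pr p_odd; have p_gt1 := prime_gt1 p_pr.
have [F charF cardF] := pPrimePowerField (p := 2) (k := p.-1) isT ltac:(by rewrite ltn_predRL).
have p_dvd_units : (p %| #|[set: {unit F}]|)%N.
  rewrite card_finField_unit cardF -subn1 -eqn_mod_dvd ?expn_gt0 //.
  by rewrite -totient_prime // Euler_exp_totient // prime_coprime // dvdn2 p_odd.
have [u _ ord_u] := Cauchy p_pr p_dvd_units.
exists F, (val u); split=> //; apply: prime_prim_root => //.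
  by rewrite -FinRing.val_unitX -ord_u expg_order FinRing.val_unit1.
apply/eqP => u1; have u_eq1 : u = 1%g by apply: val_inj; rewrite u1 FinRing.val_unit1.
by move: p_gt1; rewrite -ord_u u_eq1 order1.
Qed.

Local Open Scope ring_scope.

Theorem theorem3 (R : realType) :
  ~ (exists c : R, 0 < c < 1 /\
      forall (gT : finGroupType) (G : {group gT}),
        c < ratr (sdstar G) -> iwasawa G).
Proof.
case=> c [/andP[c_gt0 c_lt1] iwasawa_sdstar].
have [p M_lt_p p_pr] := prime_above (maxn (Num.Def.archi_bound (64 / (1 - c))) 2).
have p_odd : odd p by case: (even_prime p_pr) => // p2; rewrite p2 gtn_max ltnn andbF in M_lt_p.
have [F [x [charF x_prim]]] := exists_pchar2_prim_root p_pr p_odd.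
suff c_lt_sdstar : c < ratr (sdstar (G x_prim)).
  have /andP[nilG _] := iwasawa_sdstar _ _ c_lt_sdstar.
  by have := G_not_nilpotent p_pr x_prim; rewrite nilG.
apply: lt_le_trans (_ : ratr (1 - 64%:R / #|K x|%:R) <= _); last by rewrite ler_rat sdstar_G_ge.
rewrite rmorphB rmorph1 fmorph_div !rmorph_nat ltrBrDl -ltrBrDr.
have c1_gt0 : 0 < 1 - c by rewrite subr_gt0.
have lt_bound_K : 64 / (1 - c) < #|K x|%:R.
  apply: lt_le_trans (archi_boundP _) _; first by rewrite divr_ge0 ?ler0n ?ltW.
  rewrite ler_nat ltnW // (ltn_trans _ (p_lt_card_K p_pr x_prim)) //.
  by move: M_lt_p; rewrite gtn_max => /andP[].
have K_gt0 : 0 < #|K x|%:R :> R by apply: lt_trans lt_bound_K; rewrite divr_gt0 ?ltr0n.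
by rewrite ltr_pdivrMr // mulrC -ltr_pdivrMr.
Qed.
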